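(* Let $g$ be an invertible measure preserving transformation of a probability space $(X,\nu)$ with no periodic points. Let $B\subset X$ be measurable with $\nu(B)=\nu_0>0$, and let $N:B\to\{1,2,3,\dots\}$ be a measurable function such that $\tilde g(x):=g^{N(x)}(x)\in B$ for almost every $x\in B$. Assume $$\int_B N(x)\,d\nu<\infty.$$ Then there is a measurable subset $B'\subset B$ such that: (1) $\nu(B')>0$, $\tilde g(B')=B'$, and $g_*=\tilde g|_{B'}$ is invertible and $\nu$-preserving; (2) $$\int_{B'}N(x)\,d\nu\ge \nu\Big(\bigcup_{j=-\infty}^{\infty}g^j(B)\Big).$$
   Context: Such a set $B'$ is called a kernel of $\tilde g$. *)

From HB Require Import structures.
From mathcomp Require Import all_boot all_order all_algebra.
From mathcomp Require Import all_classical all_reals all_analysis.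
Set Implicit Arguments. Unset Strict Implicit. Unset Printing Implicit Defensive.
Import Order.TTheory GRing.Theory Num.Theory.
Local Open Scope classical_set_scope.
Local Open Scope ring_scope.

(* The full orbit  \bigcup_{j in Z} g^j(B)  of a set B under an invertible map g
   with inverse ginv:  g^j = iter j g for j >= 0 and g^{-j} = iter j ginv. *)
Definition zorbit_set {T : Type} (g ginv : T -> T) (B : set T) : set T :=
  \bigcup_(n in [set: nat]) ((iter n g @` B) `|` (iter n ginv @` B)).

Definition induced_map {T : Type} (g : T -> T) (N : T -> nat) : T -> T :=
  fun x => iter (N x) g x.

From HB Require Import structures.
From mathcomp Require Import all_boot all_order all_algebra.
From mathcomp Require Import all_classical all_reals all_analysis.
From mathcomp Require Import measurable_realfun zify.
Import Order.TTheory GRing.Theory Num.Theory.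
Local Open Scope classical_set_scope.
Local Open Scope ring_scope.
Set Implicit Arguments.
Unset Strict Implicit.

(* Write [G x = g^(N x) x].  Off a null set, every point of [B] has its whole
   forward [G]-orbit in [B]; the first visits of [g]-orbits to this forward
   invariant part form a wandering set of [g^-1], hence are null; and by
   Borel--Cantelli the points lying in [g^i {N > i}] for infinitely many [i]
   are null, because the [nu {N > i}] sum to the integral of [N].  The kernel
   consists of the points outside the saturations of these null sets that have
   arbitrarily long backward [G]-histories.  Since [G] is onto the kernel and
   never increases measure, the points where two backward histories with
   different return times meet are null; removing their saturation makes [G]
   a measure-preserving bijection of the kernel.  Finally every remaining
   point of the orbit of [B] lies in the Kakutani tower over the kernel, whose
   measure is at most [\sum_i nu (K `&` {N > i}) = \int_K N]. *)

Lemma uniform_bound_lt (A : nat) (Q : nat -> nat -> Prop) :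
  (forall a, (a < A)%N -> exists L, forall j, Q a j -> (j < L)%N) ->
  exists L, forall a j, (a < A)%N -> Q a j -> (j < L)%N.
Proof.
elim: A => [|A IH] H; first by exists 0%N.
have [L1 H1] := IH (fun a aA => H a (ltnW aA)).
have [L2 H2] := H A (ltnSn A).
exists (maxn L1 L2) => a j; rewrite ltnS leq_eqVlt => /orP[/eqP -> |aA] Qj.
  by apply: leq_trans (H2 _ Qj) _; exact: leq_maxr.
by apply: leq_trans (H1 _ _ aA Qj) _; exact: leq_maxl.
Qed.

Lemma pigeonhole_antitone (M : nat) (P : nat -> nat -> Prop) :
  (forall i k l, (k <= l)%N -> P i l -> P i k) ->
  (forall k, exists i, (i < M)%N /\ P i k) ->
  exists i, (i < M)%N /\ forall k, P i k.
Proof.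
move=> P_anti HP; apply: contrapT => nH.
have [L HL] : exists L, forall i k, (i < M)%N -> P i k -> (k < L)%N.
  apply: uniform_bound_lt => i iM.
  have /existsNP[K nPK] : ~ forall k, P i k by move=> Pi; apply: nH; exists i.
  exists K => k Pik; rewrite ltnNge; apply/negP => Kk; exact/nPK/(P_anti _ _ _ Kk).
have [i [iM PiL]] := HP L.
by have := HL _ _ iM PiL; rewrite ltnn.
Qed.

Lemma natmul_bounded_le0 (R : archiRealFieldType) (r c : R) :
  (forall n, r *+ n <= c) -> r <= 0.
Proof.
move=> Hn; rewrite leNgt; apply/negP => r_gt0.
have := truncnS_gt (c / r); rewrite ltr_pdivrMr // mulr_natl.
by move=> /lt_le_trans /(_ (Hn _)); rewrite ltxx.
Qed.

Section Iterates.
Variables (T : Type) (g ginv : T -> T).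
Hypotheses (gK : cancel g ginv) (ginvK : cancel ginv g).

Lemma iterK n x : iter n ginv (iter n g x) = x.
Proof. by elim: n => //= n IH; rewrite -iterS iterSr gK. Qed.

Lemma iterVK n x : iter n g (iter n ginv x) = x.
Proof. by elim: n => //= n IH; rewrite -iterS iterSr ginvK. Qed.

Lemma iterV_iter_le k n y : (k <= n)%N ->
  iter k ginv (iter n g y) = iter (n - k) g y.
Proof. by move=> kn; rewrite -{1}(subnKC kn) iterD iterK. Qed.

Lemma iterV_iter_ge k n y : (n <= k)%N ->
  iter k ginv (iter n g y) = iter (k - n) ginv y.
Proof. by move=> nk; rewrite -{1}(subnK nk) iterD iterK. Qed.

Lemma iter_iterV_le k n y : (k <= n)%N ->
  iter k g (iter n ginv y) = iter (n - k) ginv y.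
Proof. by move=> kn; rewrite -{1}(subnKC kn) iterD iterVK. Qed.

Lemma iter_iterV_ge k n y : (n <= k)%N ->
  iter k g (iter n ginv y) = iter (k - n) g y.
Proof. by move=> nk; rewrite -{1}(subnK nk) iterD iterVK. Qed.

Lemma image_iter n A : iter n g @` A = iter n ginv @^-1` A.
Proof.
apply/seteqP; split => x /=; first by move=> [y Ay <-]; rewrite iterK.
by move=> Ax; exists (iter n ginv x) => //; rewrite iterVK.
Qed.

Lemma image_iterV n A : iter n ginv @` A = iter n g @^-1` A.
Proof.
apply/seteqP; split => x /=; first by move=> [y Ay <-]; rewrite iterVK.
by move=> Ax; exists (iter n g x) => //; rewrite iterK.
Qed.

Definition saturation (S : set T) :=
  [set z | exists j k, S (iter j g (iter k ginv z))].

Lemma saturationE S :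
  saturation S = \bigcup_k \bigcup_j (iter k ginv @^-1` (iter j g @^-1` S)).
Proof.
apply/seteqP; split => z /=; first by move=> [j [k Sz]]; exists k => //; exists j.
by move=> [k _ [j _ Sz]]; exists j, k.
Qed.

Lemma sub_saturation S : S `<=` saturation S.
Proof. by move=> z Sz; exists 0%N, 0%N. Qed.

Lemma subset_saturation S S' : S `<=` S' -> saturation S `<=` saturation S'.
Proof. by move=> SS' z [j [k Sz]]; exists j, k; exact: SS'. Qed.

Lemma saturation_iterV S n z : saturation S (iter n ginv z) <-> saturation S z.
Proof.
split; first by move=> [j [k Sz]]; exists j, (k + n)%N; rewrite iterD.
move=> [j [k Sz]]; exists (j + n)%N, k.
have -> : iter k ginv (iter n ginv z) = iter n ginv (iter k ginv z).
  by rewrite -!iterD addnC.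
by rewrite iterD iterVK.
Qed.

Lemma saturation_iter S n z : saturation S (iter n g z) <-> saturation S z.
Proof.
split; last by move=> [j [k Sz]]; exists j, (k + n)%N; rewrite iterD iterK.
move=> [j [k Sz]]; have [kn|nk] := leqP k n.
  by exists (j + (n - k))%N, 0%N; rewrite /= iterD -iterV_iter_le.
by exists j, (k - n)%N; rewrite -iterV_iter_ge // ltnW.
Qed.

End Iterates.

Section PreservingMap.
Context d (X : measurableType d) (R : realType) (mu : {measure set X -> \bar R}).
Variable f : X -> X.
Hypotheses (mf : measurable_fun setT f)
  (mu_f : forall A, measurable A -> mu (f @^-1` A) = mu A).

Lemma measurable_preimage_iter n A :
  measurable A -> measurable (iter n f @^-1` A).
Proof.
elim: n A => // n IH A mA; apply: (IH (f @^-1` A)).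
by have := mf measurableT mA; rewrite setTI.
Qed.

Lemma measure_preimage_iter n A :
  measurable A -> mu (iter n f @^-1` A) = mu A.
Proof.
elim: n A => // n IH A mA; rewrite (IH (f @^-1` A)) ?mu_f //.
by have := mf measurableT mA; rewrite setTI.
Qed.

Lemma negligible_preimage_iter n A :
  mu.-negligible A -> mu.-negligible (iter n f @^-1` A).
Proof.
move=> [C [mC C0 AC]]; exists (iter n f @^-1` C); split.
- exact: measurable_preimage_iter.
- by rewrite measure_preimage_iter.
- by move=> x /= /AC.
Qed.

End PreservingMap.

Lemma measure_preimage_inverse d (X : measurableType d) (R : realType)
    (mu : {measure set X -> \bar R}) (f finv : X -> X) :
  cancel f finv -> measurable_fun setT finv ->
  (forall A, measurable A -> mu (f @^-1` A) = mu A) ->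
  forall A, measurable A -> mu (finv @^-1` A) = mu A.
Proof.
move=> fK mfinv mu_f A mA; rewrite -mu_f.
  by congr (mu _); apply/funext => x /=; rewrite fK.
by have := mfinv measurableT _ mA; rewrite setTI.
Qed.

Lemma wandering_null d (X : measurableType d) (R : realType)
    (mu : {finite_measure set X -> \bar R}) (f : X -> X) (W : set X) :
  measurable_fun setT f ->
  (forall A, measurable A -> mu (f @^-1` A) = mu A) ->
  measurable W -> trivIset setT (fun k => iter k f @^-1` W) -> mu W = 0.
Proof.
move=> mf mu_f mW tW; pose F k := iter k f @^-1` W.
have mF k : measurable (F k) by exact: measurable_preimage_iter.
have sum_le : (\sum_(k <oo) mu (F k) <= mu setT)%E.
  rewrite -measure_semi_bigcup //; last exact: bigcupT_measurable.
  by apply: le_measure; rewrite ?inE //; exact: bigcupT_measurable.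
have W_fin : mu W \is a fin_num by exact: fin_num_measure.
have T_fin : mu setT \is a fin_num by exact: fin_num_measure.
rewrite -(fineK W_fin); congr (_%:E); apply/eqP.
rewrite eq_le fine_ge0 ?measure_ge0 // andbT.
apply: (@natmul_bounded_le0 _ _ (fine (mu setT))) => n.
rewrite -lee_fin fineK //; apply: le_trans sum_le.
apply: le_trans (nneseries_lim_ge n _); last by move=> k _ _.
rewrite (eq_bigr (fun _ => (fine (mu W))%:E)); last first.
  by move=> k _; rewrite /F measure_preimage_iter // fineK.
by rewrite sumEFin sumr_const_nat subn0.
Qed.

Lemma measureI_eq0_of_le_measureD d (X : measurableType d) (R : realType)
    (mu : {finite_measure set X -> \bar R}) (A Y : set X) :
  measurable A -> measurable Y -> (mu A <= mu (A `\` Y))%E -> mu (A `&` Y) = 0.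
Proof.
move=> mA mY; rewrite (measureDI mu mA mY) -[leRHS]adde0 leeD2lE.
  by move=> AY_le0; apply/eqP; rewrite eq_le AY_le0 measure_ge0.
by apply: fin_num_measure; exact: measurableD.
Qed.

Section InducedMap.
Context d (X : measurableType d) (R : realType) (nu : probability X R).
Variables (g ginv : X -> X).
Hypotheses (gK : cancel g ginv) (ginvK : cancel ginv g).
Hypotheses (mg : measurable_fun setT g) (mginv : measurable_fun setT ginv).
Hypothesis nu_g : forall A, measurable A -> nu (g @^-1` A) = nu A.
Hypothesis g_aperiodic : forall x n, (0 < n)%N -> iter n g x <> x.
Variables (B : set X) (N : X -> nat).
Hypotheses (mB : measurable B) (N_gt0 : forall x, B x -> (0 < N x)%N).
Hypothesis mN : measurable_fun B N.

Local Notation G := (induced_map g N).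
Local Notation saturation := (saturation g ginv).

Let nu_ginv : forall A, measurable A -> nu (ginv @^-1` A) = nu A :=
  measure_preimage_inverse gK mginv nu_g.

Let mpre_g n A : measurable A -> measurable (iter n g @^-1` A).
Proof. exact: measurable_preimage_iter. Qed.
Let mpre_ginv n A : measurable A -> measurable (iter n ginv @^-1` A).
Proof. exact: measurable_preimage_iter. Qed.

Lemma measurable_saturation S : measurable S -> measurable (saturation S).
Proof.
move=> mS; rewrite saturationE; do 2![apply: bigcupT_measurable => ?].
exact/mpre_ginv/mpre_g.
Qed.

Lemma negligible_saturation S :
  nu.-negligible S -> nu.-negligible (saturation S).
Proof.
move=> nS; rewrite saturationE; do 2![apply: negligible_bigcup => ?].
exact/(negligible_preimage_iter mginv nu_ginv)/(negligible_preimage_iter mg nu_g).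
Qed.

Definition Beq n := B `&` N @^-1` [set n].
Definition Bgt n := B `&` N @^-1` [set k | (n < k)%N].

Lemma measurable_Beq n : measurable (Beq n). Proof. exact: mN. Qed.
Lemma measurable_Bgt n : measurable (Bgt n). Proof. exact: mN. Qed.

Lemma preimage_induced A C : A `<=` B ->
  A `&` G @^-1` C = \bigcup_n (A `&` Beq n `&` iter n g @^-1` C).
Proof.
move=> AB; apply/seteqP; split => x /=.
- move=> [Ax GC]; exists (N x) => //.
  by split => //; split => //; split => //; exact: AB.
- by move=> [n _ [[Ax [Bx /= Nx]] Cx]]; split => //; rewrite /induced_map Nx.
Qed.

Lemma measurable_preimage_induced A C : measurable A -> A `<=` B ->
  measurable C -> measurable (A `&` G @^-1` C).
Proof.
move=> mA AB mC; rewrite preimage_induced //; apply: bigcupT_measurable => n.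
apply: measurableI; last exact: mpre_g.
by apply: measurableI => //; exact: measurable_Beq.
Qed.

Lemma image_induced A : A `<=` B ->
  G @` A = \bigcup_n (iter n ginv @^-1` (A `&` Beq n)).
Proof.
move=> AB; apply/seteqP; split => y /=.
- move=> [x Ax <-]; exists (N x) => //=; rewrite /induced_map iterK //.
  by split => //; split => //; exact: AB.
- move=> [n _ /= [Ay [By Ny]]]; exists (iter n ginv y) => //.
  by rewrite /induced_map Ny iterVK.
Qed.

Lemma measurable_image_induced A : measurable A -> A `<=` B ->
  measurable (G @` A).
Proof.
move=> mA AB; rewrite image_induced //; apply: bigcupT_measurable => n.
by apply: mpre_ginv; apply: measurableI => //; exact: measurable_Beq.
Qed.

Lemma measure_sum_Beq A : measurable A -> A `<=` B ->
  nu A = (\sum_(n <oo) nu (A `&` Beq n))%E.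
Proof.
move=> mA AB.
have AE : A = \bigcup_n (A `&` Beq n).
  apply/seteqP; split => [x Ax|x [n _ []//]].
  by exists (N x) => //; split => //; split => //; exact: AB.
rewrite {1}AE measure_semi_bigcup -?AE //.
  by move=> n; apply: measurableI => //; exact: measurable_Beq.
by move=> i j _ _ [x [[_ [_ <-]] [_ [_ <-]]]].
Qed.

Lemma le_measure_image_induced A : measurable A -> A `<=` B ->
  (nu (G @` A) <= nu A)%E.
Proof.
move=> mA AB.
have mF n : measurable (iter n ginv @^-1` (A `&` Beq n)).
  by apply: mpre_ginv; apply: measurableI => //; exact: measurable_Beq.
rewrite image_induced //.
apply: le_trans (measure_sigma_subadditive _ mF _ _) _ => //.
  exact: bigcupT_measurable.
rewrite (measure_sum_Beq mA AB); apply: lee_nneseries => // n _.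
rewrite measure_preimage_iter //.
by apply: measurableI => //; exact: measurable_Beq.
Qed.

Lemma negligible_preimage_induced C :
  nu.-negligible C -> nu.-negligible (B `&` G @^-1` C).
Proof.
move=> nC; apply: (negligibleS (A := \bigcup_n (iter n g @^-1` C))).
  by move=> x [Bx GC]; exists (N x).
by apply: negligible_bigcup => n; exact: negligible_preimage_iter.
Qed.

Lemma sum_indic_Bgt x : B x ->
  (\sum_(k <oo) (\1_(Bgt k) x)%:E = ((N x)%:R : R)%:E)%E.
Proof.
move=> Bx; rewrite (nneseries_split 0 (N x)); last by move=> k _; rewrite lee_fin.
rewrite eseries0 ?adde0; last first.
  move=> i /= Ni _; rewrite indicE memNset //= => -[_ /= ltiN].
  by move: Ni; rewrite leqNgt add0n ltiN.
rewrite add0n sumEFin (@eq_big_nat _ _ _ 0 (N x) _ (fun _ => 1)).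
  by rewrite sumr_const_nat subn0.
by move=> i /andP[_ ltiN]; rewrite indicE mem_set.
Qed.

(* Layer-cake formula: [N = \sum_k \1_(Bgt k)] on [B]. *)
Lemma integral_N_sum_Bgt A : measurable A -> A `<=` B ->
  (\int[nu]_(x in A) ((N x)%:R : R)%:E = \sum_(k <oo) nu (Bgt k `&` A))%E.
Proof.
move=> mA AB.
transitivity (\sum_(k <oo) \int[nu]_(x in A) (\1_(Bgt k) x)%:E)%E; last first.
  by apply: eq_eseriesr => k _; rewrite integral_indic //; exact: measurable_Bgt.
rewrite -integral_nneseries //.
- by apply: eq_integral => x /[!inE] Ax; rewrite sum_indic_Bgt //; exact: AB.
- move=> n; apply/measurable_EFinP; apply: measurable_indic.
  exact: measurable_Bgt.
Qed.


Definition Bfwd := [set x | forall k, B (iter k G x)].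

Fixpoint Bupto k := if k is k'.+1 then B `&` G @^-1` Bupto k' else B.

Lemma BuptoP k x : Bupto k x <-> (forall i, (i <= k)%N -> B (iter i G x)).
Proof.
elim: k x => [|k IH] x /=.
  by split => [Bx [|i]|H] //; exact: (H 0%N).
split => [[Bx /IH H] [|i] ik //=|H]; first by rewrite -iterS iterSr; exact: H.
by split; [exact: (H 0%N) | apply/IH => i ik; rewrite -iterSr; exact: H].
Qed.

Lemma measurable_Bupto k : measurable (Bupto k).
Proof. by elim: k => [|k IH] //=; exact: measurable_preimage_induced. Qed.

Lemma Bfwd_bigcap : Bfwd = \bigcap_k Bupto k.
Proof.
apply/seteqP; split => x /= H k; first by move=> _; apply/BuptoP.
by have /BuptoP := H k I; apply.
Qed.

Lemma measurable_Bfwd : measurable Bfwd.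
Proof.
by rewrite Bfwd_bigcap; apply: bigcapT_measurable => k; exact: measurable_Bupto.
Qed.

Lemma Bfwd_sub : Bfwd `<=` B.
Proof. by move=> x H; exact: (H 0%N). Qed.

Lemma Bfwd_induced x : Bfwd x -> Bfwd (G x).
Proof. by move=> H k; rewrite -iterSr; exact: H. Qed.

Lemma Bfwd_iter_induced s x : Bfwd x -> Bfwd (iter s G x).
Proof. by elim: s => // s IH /IH; rewrite iterS; exact: Bfwd_induced. Qed.

Section ReturnAE.
Hypothesis G_ret : {ae nu, forall x, B x -> B (G x)}.

Lemma negligible_Bupto_diff k : nu.-negligible (Bupto k `\` Bupto k.+1).
Proof.
elim: k => [|k IH].
  case: G_ret => C [mC C0 subC]; exists C; split => //.
  by move=> x /= [Bx H]; apply: subC => /= GB; apply: H; split => //; exact: GB.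
apply: negligibleS (negligible_preimage_induced IH).
by move=> x /= [[Bx Ek] H]; split => //; split => // H'; apply: H.
Qed.

Lemma negligible_B_Bfwd : nu.-negligible (B `\` Bfwd).
Proof.
apply: (negligibleS (A := \bigcup_k (Bupto k `\` Bupto k.+1))); last first.
  by apply: negligible_bigcup => k; exact: negligible_Bupto_diff.
move=> x [Bx nBfwd].
have [k /not_implyP[Ek nEk]] : exists k, ~ (Bupto k x -> Bupto k.+1 x).
  apply/existsNP => H; apply: nBfwd; rewrite Bfwd_bigcap => k _.
  by elim: k => // k IHk; exact: H.
by exists k.
Qed.

End ReturnAE.

Definition Bimg k := [set y | exists2 x, Bfwd x & iter k G x = y].

Lemma Bimg0 : Bimg 0 = Bfwd.
Proof. by apply/seteqP; split => y /=; [move=> [x ? <-]|move=> ?; exists y]. Qed.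

Lemma Bimg_succ k : Bimg k.+1 = G @` Bimg k.
Proof.
apply/seteqP; split => y /=.
- by move=> [x Bx <-]; exists (iter k G x) => //; exists x.
- by move=> [z [x Bx <-] <-]; exists x.
Qed.

Lemma Bimg_sub_Bfwd k : Bimg k `<=` Bfwd.
Proof. by move=> y [x /(Bfwd_iter_induced k) Bx <-]. Qed.

Lemma Bimg_sub k : Bimg k `<=` B.
Proof. by move=> y /Bimg_sub_Bfwd /Bfwd_sub. Qed.

Lemma measurable_Bimg k : measurable (Bimg k).
Proof.
elim: k => [|k IH]; first by rewrite Bimg0; exact: measurable_Bfwd.
by rewrite Bimg_succ; apply: measurable_image_induced => //; exact: Bimg_sub.
Qed.

Lemma Bimg_induced k y : Bimg k y -> Bimg k.+1 (G y).
Proof. by move=> [x Bx <-]; exists x => //; rewrite iterS. Qed.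

Lemma subset_Bimg k l : (k <= l)%N -> Bimg l `<=` Bimg k.
Proof.
move=> kl y [x Bx <-]; exists (iter (l - k) G x).
  exact: Bfwd_iter_induced.
by rewrite -iterD subnKC.
Qed.

Definition Bbwd := \bigcap_k Bimg k.

Lemma measurable_Bbwd : measurable Bbwd.
Proof. by apply: bigcapT_measurable => k; exact: measurable_Bimg. Qed.

Lemma Bbwd_sub : Bbwd `<=` B.
Proof. by move=> y H; exact: (Bimg_sub (H 0%N I)). Qed.

Lemma Bbwd_induced y : Bbwd y -> Bbwd (G y).
Proof. by move=> H k _; apply: subset_Bimg (leqnSn k) _ (Bimg_induced (H k I)). Qed.

Definition Bfwd_first :=
  [set b | Bfwd b /\ forall m, (0 < m)%N -> ~ Bfwd (iter m ginv b)].

Lemma measurable_Bfwd_first : measurable Bfwd_first.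
Proof.
rewrite (_ : Bfwd_first = Bfwd `&` \bigcap_m
   (if (0 < m)%N then ~` (iter m ginv @^-1` Bfwd) else setT)).
  apply: measurableI; first exact: measurable_Bfwd.
  apply: bigcapT_measurable => m; case: ifP => _ //.
  exact/measurableC/mpre_ginv/measurable_Bfwd.
apply/seteqP; split => x /= [Bx H]; split => // m.
  by move=> _; case: ifP => // m0; exact: H.
by move=> m0; have := H m I; rewrite m0.
Qed.

(* [Bfwd_first] is a wandering set of [ginv]. *)
Lemma measure_Bfwd_first : nu Bfwd_first = 0.
Proof.
apply: (wandering_null mginv nu_ginv measurable_Bfwd_first).
suff first_uniq k l x : (k < l)%N ->
    Bfwd_first (iter k ginv x) -> Bfwd_first (iter l ginv x) -> False.
  move=> i j _ _ [x [Fi Fj]]; have [ij|ji|//] := ltngtP i j.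
  - by case: (first_uniq _ _ _ ij Fi Fj).
  - by case: (first_uniq _ _ _ ji Fj Fi).
move=> kl [_ H] [Bl _]; apply: (H (l - k)%N); first by rewrite subn_gt0.
by rewrite -iterD subnK // ltnW.
Qed.

Definition Blimsup := lim_sup_set (fun i => iter i ginv @^-1` Bgt i).

Lemma measurable_Blimsup : measurable Blimsup.
Proof.
apply: bigcapT_measurable => L; apply: bigcup_measurable => i _.
exact/mpre_ginv/measurable_Bgt.
Qed.

(* Borel--Cantelli: [nu (iter i ginv @^-1` Bgt i) = nu (Bgt i)] sums to the
   integral of [N]. *)
Lemma measure_Blimsup :
  (\int[nu]_(x in B) ((N x)%:R : R)%:E < +oo)%E -> nu Blimsup = 0.
Proof.
move=> N_int; apply: lim_sup_set_cvg0 => [i|].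
  exact/mpre_ginv/measurable_Bgt.
rewrite (eq_eseriesr (g := fun k => nu (Bgt k `&` B))).
  by rewrite -integral_N_sum_Bgt.
move=> k _; rewrite measure_preimage_iter ?setIidl //; last exact: measurable_Bgt.
by move=> x [].
Qed.

Lemma iter_induced_time s x : Bfwd x ->
  exists2 t, iter s G x = iter t g x & (s <= t)%N.
Proof.
move=> Bx; elim: s => [|s [t IH st]]; first by exists 0%N.
have Bs : B (iter s G x) by exact/Bfwd_sub/Bfwd_iter_induced.
exists (N (iter s G x) + t)%N; first by rewrite iterS iterD -IH.
by rewrite -addn1 addnC leq_add // N_gt0.
Qed.

Lemma induced_iter_aperiodic s m w : (0 < m)%N ->
  Bfwd (iter m g w) -> iter s G (iter m g w) <> w.
Proof.
move=> m_gt0 /(iter_induced_time s) [t -> _]; rewrite -iterD.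
by apply: g_aperiodic; rewrite addn_gt0 m_gt0 orbT.
Qed.

(* The [G]-orbit of [b], starting [j] steps before [z], jumps over [z]. *)
Lemma induced_orbit_crossing j z b : Bfwd b -> iter j ginv z = b ->
  exists s i, [/\ (i <= j)%N, iter s G b = iter i ginv z &
                  (i < N (iter s G b))%N].
Proof.
elim/ltn_ind: j b => j IH b Bb bE.
have [jN|Nj] := ltnP j (N b); first by exists 0%N, j; split; rewrite ?bE.
have Nb_gt0 : (0 < N b)%N by exact/N_gt0/Bfwd_sub.
have GbE : iter (j - N b) ginv z = G b.
  by rewrite /induced_map -{3}bE iter_iterV_le.
have [|s [i [ij H1 H2]]] := IH (j - N b)%N _ (G b) (Bfwd_induced Bb) GbE.
  by rewrite ltn_subrL Nb_gt0 (leq_trans Nb_gt0 Nj).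
exists s.+1, i; split; rewrite ?iterSr //.
exact: leq_trans ij (leq_subr _ _).
Qed.

Lemma Blimsup_free_bound w : ~ Blimsup w -> exists M, forall i,
  B (iter i ginv w) -> (i < N (iter i ginv w))%N -> (i < M)%N.
Proof.
move=> /existsNP[L HL]; exists L => i Bi iN; rewrite ltnNge; apply/negP => Li.
by apply: HL; exists i => //; split.
Qed.

Lemma Blimsup_free_bound_shifts C w : ~ saturation Blimsup w -> exists M,
  forall c i, (c < C)%N -> B (iter i ginv (iter c ginv w)) ->
    (i < N (iter i ginv (iter c ginv w)))%N -> (i < M)%N.
Proof.
move=> nLw; have [|M HM] := @uniform_bound_lt C
  (fun c i => B (iter i ginv (iter c ginv w)) /\
              (i < N (iter i ginv (iter c ginv w)))%N).
- move=> c _; have [|M HM] := @Blimsup_free_bound (iter c ginv w).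
    by move=> Lc; apply/nLw/(saturation_iterV ginvK _ c); exact: sub_saturation Lc.
  by exists M => i []; exact: HM.
- by exists M => c i cC Bi iN; exact: HM cC (conj Bi iN).
Qed.

(* The [g]-distance covered by [s] steps of [G] from [Bfwd] to a point whose
   orbit avoids [Blimsup] is bounded: the last step is short because of
   [Blimsup], and the earlier ones by induction. *)
Lemma induced_reach_bounded s w : ~ saturation Blimsup w ->
  exists L, forall j, Bfwd (iter j ginv w) -> iter s G (iter j ginv w) = w ->
    (j < L)%N.
Proof.
move=> nLw; elim: s => [|s [Ls IH]].
  exists 1%N => -[|j] _ //= wE.
  have wg : iter j.+1 g w = w by rewrite -{1}wE iterVK.
  by case: (g_aperiodic (ltn0Sn j) wg).
have [M HM] := Blimsup_free_bound_shifts Ls.+1 nLw.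
exists (Ls + M).+1 => j; set b := iter j ginv w => Bb; rewrite iterSr => Hs.
have Nb_gt0 : (0 < N b)%N by exact/N_gt0/Bfwd_sub.
have [Nj|jN] := leqP (N b) j; last first.
  have GbE : G b = iter (N b - j) g w by rewrite /induced_map iter_iterV_ge // ltnW.
  have m_gt0 : (0 < N b - j)%N by rewrite subn_gt0.
  move: Hs (Bfwd_induced Bb); rewrite GbE => Hs Bm.
  by case: (induced_iter_aperiodic m_gt0 Bm Hs).
have GbE : G b = iter (j - N b) ginv w by rewrite /induced_map iter_iterV_le.
have jL : (j - N b < Ls)%N by apply: IH; rewrite -GbE //; exact: Bfwd_induced.
have jE : ((N b).-1 + (j - N b).+1 = j)%N by lia.
have := HM (j - N b).+1 (N b).-1; rewrite ltnS -iterD jE prednK //.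
by move=> /(_ jL (Bfwd_sub Bb) (leqnn _)); lia.
Qed.

Lemma Bbwd_preimage y : Bbwd y -> ~ saturation Blimsup y ->
  exists x, [/\ Bbwd x, G x = y & x = iter (N x) ginv y].
Proof.
move=> By nLy; have [M HM] := Blimsup_free_bound_shifts 2 nLy.
pose P n k := Bimg k (iter n ginv y) /\ N (iter n ginv y) = n.
have P_anti i k l : (k <= l)%N -> P i l -> P i k.
  by move=> kl [Bl Ni]; split => //; exact: subset_Bimg kl _ Bl.
have P_cover k : exists i, (i < M.+1)%N /\ P i k.
  have : Bimg k.+1 y by exact: By.
  rewrite Bimg_succ => -[x Bx Gx].
  have xE : x = iter (N x) ginv y by rewrite -Gx /induced_map iterK.
  have Nx_gt0 : (0 < N x)%N by exact/N_gt0/(Bimg_sub Bx).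
  exists (N x); split; last by rewrite /P -xE.
  have := HM 1%N (N x).-1 erefl; rewrite -iterD addn1 prednK // -xE.
  by move=> /(_ (Bimg_sub Bx) (leqnn _)).
have [n [_ Pn]] := pigeonhole_antitone P_anti P_cover.
have [_ Nn] := Pn 0%N; exists (iter n ginv y); split; rewrite ?Nn //.
  by move=> k _; have [] := Pn k.
by rewrite /induced_map Nn iterVK.
Qed.

Lemma Bfwd_first_entrance u a : Bfwd (iter a g u) ->
  (forall m, (0 < m)%N -> ~ Bfwd (iter m ginv u)) ->
  exists a', Bfwd_first (iter a' g u).
Proof.
move=> + u_past; elim/ltn_ind: a => a IH Ba.
have [[m [m_gt0 Bm]]|no_past] :=
  pselect (exists m, (0 < m)%N /\ Bfwd (iter m ginv (iter a g u))).
  have [ma|am] := leqP m a.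
    by apply: (IH (a - m)%N); [lia | rewrite -(iterV_iter_le gK)].
  by case: (u_past (m - a)%N); [lia | rewrite -(iterV_iter_ge gK) // ltnW].
by exists a; split => // m m_gt0 Bm; apply: no_past; exists m.
Qed.

Lemma Bfwd_recurrent z : zorbit_set g ginv B z ->
  ~ saturation (B `\` Bfwd) z -> ~ saturation Bfwd_first z ->
  forall L, exists2 j, (L <= j)%N & Bfwd (iter j ginv z).
Proof.
move=> Oz nBz nFz L; apply: contrapT => no_visit.
have Bz : saturation Bfwd z.
  case: Oz nBz => n _ [] [b Bb <-] nBz.
  - exists 0%N, n => /=; rewrite iterK //; apply: contrapT => nBb.
    by apply: nBz; apply/(saturation_iter gK _ n); exists 0%N, 0%N.
  - exists n, 0%N => /=; rewrite iterVK //; apply: contrapT => nBb.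
    by apply: nBz; apply/(saturation_iterV ginvK _ n); exists 0%N, 0%N.
pose u := iter L ginv z.
have u_past m : (0 < m)%N -> ~ Bfwd (iter m ginv u).
  by move=> _ Bm; apply: no_visit; exists (m + L)%N; rewrite ?leq_addl ?iterD.
have [a Ba] : exists a, Bfwd (iter a g u).
  have [j [k Bjk]] : saturation Bfwd u := iffRL (saturation_iterV ginvK _ L z) Bz.
  have [kj|jk] := leqP k j.
    by exists (j - k)%N; rewrite -(iter_iterV_ge ginvK).
  by case: (u_past (k - j)%N); [lia | rewrite -(iter_iterV_le ginvK) // ltnW].
have [a' Fa'] := Bfwd_first_entrance Ba u_past.
by apply: nFz; apply/(saturation_iterV ginvK _ L)/(saturation_iter gK _ a');
  exists 0%N, 0%N.
Qed.

Section Cover.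
Variable z : X.
Hypotheses (Oz : zorbit_set g ginv B z) (nBz : ~ saturation (B `\` Bfwd) z)
  (nFz : ~ saturation Bfwd_first z) (nLz : ~ saturation Blimsup z).

Let z_bound : exists M, forall i,
  B (iter i ginv z) -> (i < N (iter i ginv z))%N -> (i < M)%N.
Proof. by apply: Blimsup_free_bound => Lz; apply/nLz/(sub_saturation g ginv). Qed.

(* A point of [Bfwd] far enough in the past of [z] needs at least [k] steps of
   [G] to jump over [z], by [induced_reach_bounded]. *)
Lemma Bimg_tower_cover k :
  exists i, Bimg k (iter i ginv z) /\ (i < N (iter i ginv z))%N.
Proof.
have [M HM] := z_bound.
have [L HL] : exists L, forall s j, (s < k)%N -> (exists i, [/\ (i < M)%N,
    Bfwd (iter j ginv (iter i ginv z)) &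
    iter s G (iter j ginv (iter i ginv z)) = iter i ginv z]) -> (j < L)%N.
  apply: uniform_bound_lt => s _.
  have [L HL] : exists L, forall i j, (i < M)%N ->
      Bfwd (iter j ginv (iter i ginv z)) /\
      iter s G (iter j ginv (iter i ginv z)) = iter i ginv z -> (j < L)%N.
    apply: uniform_bound_lt => i _.
    have [|L HL] := @induced_reach_bounded s (iter i ginv z).
      by move/(saturation_iterV ginvK).
    by exists L => j []; exact: HL.
  by exists L => j [i [iM Bj Hs]]; exact: (HL i).
have [j Lj Bj] := Bfwd_recurrent Oz nBz nFz (L + M).
have [s [i [ij Hs iN]]] := induced_orbit_crossing Bj erefl.
have iM : (i < M)%N by apply: HM; rewrite -Hs //; exact/Bfwd_sub/Bfwd_iter_induced.
exists i; rewrite -Hs; split => //.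
have [ks|sk] := leqP k s.
  exists (iter (s - k) G (iter j ginv z)); first exact: Bfwd_iter_induced.
  by rewrite -iterD subnKC.
have jiL : (j - i < L)%N.
  by apply: (HL s _ sk); exists i; split; rewrite // -iterD subnK.
by exfalso; lia.
Qed.

Lemma tower_cover :
  exists i, Bbwd (iter i ginv z) /\ (i < N (iter i ginv z))%N.
Proof.
have [M HM] := z_bound.
pose P i k := Bimg k (iter i ginv z) /\ (i < N (iter i ginv z))%N.
have P_anti i k l : (k <= l)%N -> P i l -> P i k.
  by move=> kl [Bl iN]; split => //; exact: subset_Bimg kl _ Bl.
have P_cover k : exists i, (i < M)%N /\ P i k.
  have [i [Bi iN]] := Bimg_tower_cover k.
  by exists i; split => //; apply: HM => //; exact: Bimg_sub Bi.
have [i [_ Pi]] := pigeonhole_antitone P_anti P_cover.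
by exists i; split => [k _|]; [have [] := Pi k | have [] := Pi 0%N].
Qed.

End Cover.

Lemma measurable_zorbit : measurable (zorbit_set g ginv B).
Proof.
apply: bigcupT_measurable => n; apply: measurableU.
- by rewrite (image_iter gK ginvK); exact: mpre_ginv.
- by rewrite (image_iterV gK ginvK); exact: mpre_g.
Qed.

Section Kernel.
Hypotheses (G_ret : {ae nu, forall x, B x -> B (G x)})
  (N_int : (\int[nu]_(x in B) ((N x)%:R : R)%:E < +oo)%E).

Definition Bnull := (B `\` Bfwd) `|` Bfwd_first `|` Blimsup.

Lemma measurable_Bnull : measurable Bnull.
Proof.
apply: measurableU; last exact: measurable_Blimsup.
apply: measurableU; last exact: measurable_Bfwd_first.
exact: measurableD mB measurable_Bfwd.
Qed.

Lemma measure_Bnull : nu Bnull = 0.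
Proof.
apply/negligibleP; first exact: measurable_Bnull.
apply: negligibleU; last first.
  by apply/negligibleP; [exact: measurable_Blimsup | exact: measure_Blimsup].
apply: negligibleU; first exact: negligible_B_Bfwd.
by apply/negligibleP; [exact: measurable_Bfwd_first | exact: measure_Bfwd_first].
Qed.

Definition Bcore := Bbwd `\` saturation Bnull.

Lemma measurable_Bcore : measurable Bcore.
Proof.
apply: measurableD; first exact: measurable_Bbwd.
exact/measurable_saturation/measurable_Bnull.
Qed.

Lemma Bcore_sub : Bcore `<=` B.
Proof. by move=> x [/Bbwd_sub]. Qed.

Lemma Bcore_induced x : Bcore x -> Bcore (G x).
Proof.
move=> [Bx nNx]; split; first exact: Bbwd_induced.
by move/(saturation_iter gK).
Qed.

Lemma Bcore_preimage y : Bcore y ->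
  exists x, [/\ Bcore x, G x = y & x = iter (N x) ginv y].
Proof.
move=> [By nNy]; have [|x [Bx Gx xE]] := Bbwd_preimage By.
  by apply: contra_not nNy; apply: subset_saturation => w Lw; right.
exists x; split => //; split => // Nx; apply: nNy.
by move: Nx; rewrite xE => /(saturation_iterV ginvK).
Qed.

(* Points of [Bcore] with return time [m] whose image also has a preimage in
   [Bcore] with return time [n]; for [n != m] this is where [G] fails to be
   injective. *)
Definition collision n m := Bcore `&` Beq m `&`
  iter m g @^-1` (iter n ginv @^-1` (Bcore `&` Beq n)).

Lemma measurable_collision n m : measurable (collision n m).
Proof.
have mKn k : measurable (Bcore `&` Beq k).
  by apply: measurableI; [exact: measurable_Bcore | exact: measurable_Beq].
by apply: measurableI; [exact: mKn | exact/mpre_g/mpre_ginv].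
Qed.

Lemma Bcore_sub_image_collision_free n m : n != m ->
  Bcore `<=` G @` (Bcore `\` collision n m).
Proof.
move=> nm y Ky; have [x [Kx Gx xE]] := Bcore_preimage Ky.
have [Cx|nCx] := pselect (collision n m x); last by exists x.
case: Cx => -[_ [_ /= Nx]] [/= Kx' [_ /= Nx']].
have yE : y = iter m g x by rewrite -Gx /induced_map Nx.
exists (iter n ginv y); last by rewrite yE /induced_map Nx' iterVK.
rewrite yE; split => // -[[_ [_ /= Nm]] _].
by move: Nx'; rewrite Nm => nmE; rewrite nmE eqxx in nm.
Qed.

(* [G] does not decrease measure and [Bcore] is covered by the image of
   [Bcore] minus a collision set, which must then be null. *)
Lemma measure_collision n m : n != m -> nu (collision n m) = 0.
Proof.
move=> nm; have mKC : measurable (Bcore `\` collision n m).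
  by apply: measurableD; [exact: measurable_Bcore | exact: measurable_collision].
have KC_sub : Bcore `\` collision n m `<=` B by move=> x [/Bcore_sub].
rewrite -(setIidr (_ : collision n m `<=` Bcore)); last by move=> x [[]].
apply: measureI_eq0_of_le_measureD.
- exact: measurable_Bcore.
- exact: measurable_collision.
apply: le_trans (le_measure_image_induced mKC KC_sub).
apply: le_measure; rewrite ?inE; first exact: measurable_Bcore.
  exact: measurable_image_induced.
exact: Bcore_sub_image_collision_free.
Qed.

Definition collisions :=
  \bigcup_n \bigcup_m (if n == m then set0 else collision n m).

Lemma measurable_collisions : measurable collisions.
Proof.
do 2![apply: bigcupT_measurable => ?]; case: ifP => // _.
exact: measurable_collision.
Qed.

Lemma measure_collisions : nu collisions = 0.
Proof.
apply/negligibleP; first exact: measurable_collisions.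
do 2![apply: negligible_bigcup => ?]; case: ifPn => [_|nm].
  exact: negligible_set0.
by apply/negligibleP; [exact: measurable_collision | exact: measure_collision].
Qed.

Definition induced_kernel := Bcore `\` saturation collisions.

Lemma measurable_induced_kernel : measurable induced_kernel.
Proof.
apply: measurableD; first exact: measurable_Bcore.
exact/measurable_saturation/measurable_collisions.
Qed.

Lemma induced_kernel_sub : induced_kernel `<=` B.
Proof. by move=> x [/Bcore_sub]. Qed.

Lemma image_induced_kernel : G @` induced_kernel = induced_kernel.
Proof.
apply/seteqP; split => y.
  move=> [x [Kx nCx] <-]; split; first exact: Bcore_induced.
  by move/(saturation_iter gK).
move=> [Ky nCy]; have [x [Kx Gx xE]] := Bcore_preimage Ky.
exists x => //; split => // Cx; apply: nCy.
by move: Cx; rewrite xE => /(saturation_iterV ginvK).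
Qed.

Lemma injective_induced_kernel : {in induced_kernel &, injective G}.
Proof.
move=> x x' /set_mem [Kx _] /set_mem [Kx' nCx'] Gxx'.
have [Nxx'|Nxx'] := eqVneq (N x) (N x').
  apply: (can_inj (iterK gK (N x))).
  by move: Gxx'; rewrite /induced_map -Nxx'.
exfalso; apply: nCx'; apply: (sub_saturation g ginv).
exists (N x) => //; exists (N x') => //; rewrite (negbTE Nxx').
split; first by split => //; split => //; exact: Bcore_sub.
rewrite /= -[iter (N x') g x']/(G x') -Gxx' /induced_map iterK //.
by split => //; split => //; exact: Bcore_sub.
Qed.

Lemma measurable_fun_induced_kernel : measurable_fun induced_kernel G.
Proof.
move=> _ C mC; apply: measurable_preimage_induced => //.
  exact: measurable_induced_kernel.
exact: induced_kernel_sub.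
Qed.

Lemma measurable_image_induced_kernel A : measurable A ->
  A `<=` induced_kernel -> measurable (G @` A).
Proof.
by move=> mA AK; apply: measurable_image_induced mA (subset_trans AK _);
  exact: induced_kernel_sub.
Qed.

Lemma measure_image_induced_kernel A : measurable A -> A `<=` induced_kernel ->
  nu (G @` A) = nu A.
Proof.
move=> mA AK; have AB : A `<=` B := subset_trans AK induced_kernel_sub.
have mF n : measurable (iter n ginv @^-1` (A `&` Beq n)).
  by apply: mpre_ginv; apply: measurableI => //; exact: measurable_Beq.
rewrite image_induced // measure_semi_bigcup //; last 2 first.
- move=> i j _ _ [y [/= [Ai [_ /= Ni]] [Aj [_ /= Nj]]]].
  suff ij : iter i ginv y = iter j ginv y by rewrite -Ni ij Nj.
  apply: injective_induced_kernel; rewrite ?inE; [exact: AK|exact: AK|].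
  by rewrite /induced_map Ni Nj !iterVK.
- exact: bigcupT_measurable.
rewrite (measure_sum_Beq mA AB); apply: eq_eseriesr => n _.
rewrite measure_preimage_iter //.
by apply: measurableI => //; exact: measurable_Beq.
Qed.

Lemma measure_preimage_induced_kernel A : measurable A ->
  A `<=` induced_kernel -> nu (induced_kernel `&` G @^-1` A) = nu A.
Proof.
move=> mA AK; have mKA : measurable (induced_kernel `&` G @^-1` A).
  apply: measurable_preimage_induced => //.
    exact: measurable_induced_kernel.
  exact: induced_kernel_sub.
have KA_sub : induced_kernel `&` G @^-1` A `<=` induced_kernel by move=> x [].
rewrite -(measure_image_induced_kernel mKA KA_sub).
congr (nu _); apply/seteqP; split => [y [x [_ /= Ax] <-] //|y Ay].
have [x Kx Gx] : (G @` induced_kernel) y by rewrite image_induced_kernel; exact: AK.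
by exists x => //; split => //; move: Ay; rewrite -Gx.
Qed.

Lemma measurable_Bgt_kernel i : measurable (Bgt i `&` induced_kernel).
Proof.
by apply: measurableI; [exact: measurable_Bgt | exact: measurable_induced_kernel].
Qed.

(* The Kakutani tower over the kernel: its [i]-th floor is the image under
   [g^i] of the points of the kernel that return after more than [i] steps. *)
Definition tower := \bigcup_i (iter i ginv @^-1` (Bgt i `&` induced_kernel)).

Lemma zorbit_sub_tower :
  zorbit_set g ginv B `<=` tower `|` saturation Bnull `|` saturation collisions.
Proof.
move=> z Oz.
have [|nNz] := pselect (saturation Bnull z); first by left; right.
have [|nCz] := pselect (saturation collisions z); first by right.
left; left; have sub_Bnull S : S `<=` Bnull -> ~ saturation S z.
  by move=> SN Sz; apply/nNz/(subset_saturation SN).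
have [|||i [Bi iN]] := @tower_cover z Oz.
- by apply: sub_Bnull => x Bx; left; left.
- by apply: sub_Bnull => x Bx; left; right.
- by apply: sub_Bnull => x Bx; right.
exists i => //=; split; first by split => //; exact: Bbwd_sub.
split; first by split => // /(saturation_iterV ginvK).
by move/(saturation_iterV ginvK).
Qed.

Lemma measure_zorbit_le_integral : (nu (zorbit_set g ginv B) <=
  \int[nu]_(x in induced_kernel) ((N x)%:R : R)%:E)%E.
Proof.
have mF i : measurable (iter i ginv @^-1` (Bgt i `&` induced_kernel)).
  exact/mpre_ginv/measurable_Bgt_kernel.
have mT : measurable tower by exact: bigcupT_measurable.
have mNC : measurable (saturation Bnull `|` saturation collisions).
  by apply: measurableU; apply: measurable_saturation;
    [exact: measurable_Bnull | exact: measurable_collisions].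
have nNC : (nu (saturation Bnull `|` saturation collisions) <= 0)%E.
  rewrite le_eqVlt (_ : nu _ = 0) ?eqxx //.
  apply/negligibleP => //; apply: negligibleU; apply: negligible_saturation.
    by apply/negligibleP; [exact: measurable_Bnull | exact: measure_Bnull].
  by apply/negligibleP; [exact: measurable_collisions | exact: measure_collisions].
rewrite integral_N_sum_Bgt; last exact: induced_kernel_sub.
  2: exact: measurable_induced_kernel.
apply: le_trans (le_measure _ _ _ zorbit_sub_tower) _; rewrite ?inE.
- exact: measurable_zorbit.
- by rewrite -setUA; exact: measurableU.
rewrite -setUA; apply: le_trans (measureU2 _ mT mNC) _.
apply: le_trans (leeD2l (nu tower) nNC) _; rewrite adde0.
apply: le_trans (measure_sigma_subadditive _ mF mT _) _ => //.
apply: lee_nneseries => // i _.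
by rewrite measure_preimage_iter //; exact: measurable_Bgt_kernel.
Qed.

Lemma measure_induced_kernel_gt0 : (0 < nu B)%E -> (0 < nu induced_kernel)%E.
Proof.
move=> nuB_gt0; rewrite lt0e measure_ge0 andbT; apply/negP => /eqP K0.
have B_le : (nu B <= nu (zorbit_set g ginv B))%E.
  apply: le_measure; rewrite ?inE //; first exact: measurable_zorbit.
  by move=> x Bx; exists 0%N => //; left; exists x.
have int0 : (\int[nu]_(x in induced_kernel) ((N x)%:R : R)%:E = 0)%E.
  rewrite integral_N_sum_Bgt; last exact: induced_kernel_sub.
    2: exact: measurable_induced_kernel.
  apply: eseries0 => i _ _; apply/eqP; rewrite -measure_le0 -K0.
  apply: le_measure; rewrite ?inE; last by move=> x [].
    exact: measurable_Bgt_kernel.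
  exact: measurable_induced_kernel.
have := le_trans B_le measure_zorbit_le_integral.
by rewrite int0 leNgt nuB_gt0.
Qed.

End Kernel.

End InducedMap.

Theorem theorem3p2 (d : measure_display) (X : measurableType d) (R : realType)
  (nu : probability X R) (g ginv : X -> X)
  (hgK : cancel g ginv) (hginvK : cancel ginv g)
  (hgm : measurable_fun setT g) (hginvm : measurable_fun setT ginv)
  (hgpres : forall A, measurable A -> nu (g @^-1` A) = nu A)
  (hnoper : forall (x : X) (n : nat), (0 < n)%N -> iter n g x <> x)
  (B : set X) (hB : measurable B) (hBpos : (0 < nu B)%E)
  (N : X -> nat) (hNpos : forall x, B x -> (0 < N x)%N)
  (hNm : measurable_fun B N)
  (hret : {ae nu, forall x, B x -> B (induced_map g N x)})
  (hint : (\int[nu]_(x in B) ((N x)%:R : R)%:E < +oo)%E) :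
  exists B' : set X,
    [/\ measurable B' /\ B' `<=` B,
        (0 < nu B')%E,
        induced_map g N @` B' = B',
        (* g_* = induced map restricted to B' is invertible and nu-preserving *)
        [/\ {in B' &, injective (induced_map g N)},
            measurable_fun B' (induced_map g N),
            (forall A, measurable A -> A `<=` B' ->
               measurable (induced_map g N @` A)),
            (forall A, measurable A -> A `<=` B' ->
               nu (B' `&` induced_map g N @^-1` A) = nu A) &
            (forall A, measurable A -> A `<=` B' ->
               nu (induced_map g N @` A) = nu A)] &
        (nu (zorbit_set g ginv B) <= \int[nu]_(x in B') ((N x)%:R : R)%:E)%E].
Proof.
exists (induced_kernel g ginv B N); split.
- by split; [exact: measurable_induced_kernel | exact: induced_kernel_sub].
- exact: measure_induced_kernel_gt0.
- exact: image_induced_kernel.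
- split.
  + exact: injective_induced_kernel.
  + exact: measurable_fun_induced_kernel.
  + exact: measurable_image_induced_kernel.
  + exact: measure_preimage_induced_kernel.
  + exact: measure_image_induced_kernel.
- exact: measure_zorbit_le_integral.
Qed.
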